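(* Let $G$ be a finitely generated torsion-free nilpotent group. If for some prime $p$ the group $G$ is conjugacy $\mathcal{F}_p$-separable, then $G$ is abelian.
   Context: $\mathcal{F}_p$ denotes the class of all finite $p$-groups. A group $G$ is conjugacy $\mathcal{F}_p$-separable if whenever $a,b\in G$ are not conjugate in $G$, there is a homomorphism $\varphi$ of $G$ onto a finite $p$-group $X$ such that $a\varphi$ and $b\varphi$ are not conjugate in $X$. *)

From Stdlib Require Lists.List.
From mathcomp Require Import all_boot all_fingroup all_solvable.
Set Implicit Arguments. Unset Strict Implicit. Unset Printing Implicit Defensive.

Record grp := Grp {
  gcar :> Type;
  gmul : gcar -> gcar -> gcar;
  ginv : gcar -> gcar;
  gone : gcar;
  gmulA : forall x y z, gmul x (gmul y z) = gmul (gmul x y) z;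
  gmul1 : forall x, gmul gone x = x;
  gmulV : forall x, gmul (ginv x) x = gone
}.

Section Defs.
Variable G : grp.

Fixpoint gexp (x : G) (n : nat) : G :=
  match n with 0 => gone G | n'.+1 => gmul x (gexp x n') end.

Definition torsion_free : Prop :=
  forall (x : G) (n : nat), 0 < n -> gexp x n = gone G -> x = gone G.

Inductive gen_by (S : seq G) : G -> Prop :=
  | gen_base x : Stdlib.Lists.List.In x S -> gen_by S x
  | gen_one : gen_by S (gone G)
  | gen_mul x y : gen_by S x -> gen_by S y -> gen_by S (gmul x y)
  | gen_inv x : gen_by S x -> gen_by S (ginv x).

Definition finitely_generated : Prop :=
  exists S : seq G, forall x, gen_by S x.

Definition gcomm (x y : G) : G := gmul (gmul (ginv x) (ginv y)) (gmul x y).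

Fixpoint upper_central (n : nat) : G -> Prop :=
  match n with
  | 0 => fun x => x = gone G
  | n'.+1 => fun x => forall y, upper_central n' (gcomm x y)
  end.

Definition gnilpotent : Prop := exists n, forall x, upper_central n x.

Definition gabelian : Prop := forall x y : G, gmul x y = gmul y x.

Definition gconjugate (a b : G) : Prop :=
  exists g : G, gmul (gmul (ginv g) a) g = b.

Definition is_hom (gT : finGroupType) (f : G -> gT) : Prop :=
  forall x y, f (gmul x y) = (f x * f y)%g.

Definition conj_Fp_separable (p : nat) : Prop :=
  forall a b : G, ~ gconjugate a b ->
    exists (gT : finGroupType) (f : G -> gT),
      [/\ is_hom f, (forall y : gT, exists x, f x = y),
          pgroup p [set: gT] & ~ (exists y : gT, ((f a) ^ y)%g = f b)].

End Defs.

(* Since G is nilpotent and not abelian, some x lies in the second center but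
   not in the center.  Then y |-> [x, y] is a homomorphism into the center and
   (x^q)^y = x^q [x, y]^q.  For q coprime to p, the images of x^q and
   x^q [x, g] are conjugate in every finite p-group quotient, hence, by
   separability, in G, so [x, g] = [x, h]^q for some h: the finitely generated
   abelian group C = [x, G] satisfies C = C^q.  If c is a generating vector of C,
   this reads (I - qA) c = 0 for an integer matrix A, so the adjugate gives
   det(I - qA) c = 0 with det(I - qA) = 1 mod q nonzero; torsion-freeness then
   forces C = 1, i.e. x is central. *)

From HB Require Import structures.
From mathcomp Require Import all_boot all_fingroup all_solvable.
From mathcomp Require Import ssralg ssrint matrix zmodp.
From mathcomp Require boolp.
From Stdlib Require Import Classical.
Set Implicit Arguments. Unset Strict Implicit. Unset Printing Implicit Defensive.

Import GRing.Theory.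

Section IntegerSpan.
Local Open Scope ring_scope.
Variables (V : zmodType) (n : nat) (c : 'I_n -> V).

Definition zspan (v : V) : Prop := exists a : 'I_n -> int, v = \sum_i c i *~ a i.

Lemma zspan0 : zspan 0.
Proof. by exists (fun=> 0); rewrite big1 // => i _; rewrite mulr0z. Qed.

Lemma zspan_gen i : zspan (c i).
Proof.
exists (fun j => (j == i)%:R); rewrite (bigD1 i) //= eqxx mulrz_nat big1 ?addr0 //.
by move=> j /negbTE->; rewrite mulrz_nat.
Qed.

Lemma zspanD v w : zspan v -> zspan w -> zspan (v + w).
Proof.
move=> [a ->] [b ->]; exists (fun i => a i + b i).
by rewrite -big_split; apply: eq_bigr => i _; rewrite mulrzDr.
Qed.

Lemma zspanN v : zspan v -> zspan (- v).
Proof.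
move=> [a ->]; exists (fun i => - a i).
by rewrite -sumrN; apply: eq_bigr => i _; rewrite mulrNz.
Qed.

Lemma mulrz_det_eq0 (M : 'M[int]_n) :
  (forall k, \sum_j c j *~ M k j = 0) -> forall i, c i *~ \det M = 0.
Proof.
move=> Mc0 i.
have -> : c i *~ \det M = \sum_j c j *~ (\adj M *m M) i j.
  rewrite mul_adj_mx (bigD1 i) //= big1 => [|j ji]; first by rewrite mxE eqxx addr0.
  by rewrite mxE eq_sym (negbTE ji) mulr0z.
under eq_bigr do rewrite mxE mulrz_sumr.
rewrite exchange_big big1 // => k _.
under eq_bigr do rewrite mulrC mulrzA.
by rewrite -mulrz_suml Mc0 mul0rz.
Qed.

Lemma det_1Bmuln_neq0 (A : 'M[int]_n) q : 1 < q -> \det (1%:M - A *+ q) != 0.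
Proof.
move=> q_gt1; pose f : {rmorphism int -> 'Z_q} := intr.
have : \det (map_mx f (1%:M - A *+ q)) = 1.
  suff -> : map_mx f (1%:M - A *+ q) = 1%:M by rewrite det1.
  apply/matrixP => i j; rewrite !mxE mulmxnE rmorphB !rmorphMn rmorph1.
  by rewrite -[_ *+ q]mulr_natr pchar_Zp // mulr0 subr0.
rewrite det_map_mx => det1; apply/eqP => det0.
by move: det1; rewrite det0 rmorph0 => /eqP; rewrite eq_sym oner_eq0.
Qed.

Lemma zspan_divisible_torsion q : 1 < q ->
    (forall i, exists2 w, zspan w & c i = w *+ q) ->
  exists2 d : int, d != 0 & forall i, c i *~ d = 0.
Proof.
move=> q_gt1 c_div.
have /fin_all_exists[a Ea] : forall i, exists a : 'I_n -> int,
    c i = (\sum_j c j *~ a j) *+ q.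
  by move=> i; have [w [a ->] ->] := c_div i; exists a.
exists (\det (1%:M - (\matrix_(i, j) a i j) *+ q)); first exact: det_1Bmuln_neq0.
apply: mulrz_det_eq0 => k.
under eq_bigr do rewrite !mxE mulmxnE mulrzBr mulrz_nat -mulr_natr mulrzA mulrz_nat mxE.
rewrite sumrB sumrMnl -Ea (bigD1 k) //= eqxx big1 ?addr0 ?subrr // => j.
by rewrite eq_sym => /negbTE->.
Qed.

End IntegerSpan.

Section CentralElements.
Local Open Scope group_scope.
Variable G : groupType.
Implicit Types y z : G.

Definition central z : bool := boolp.asbool (forall y, commute z y).

Lemma centralP z : reflect (forall y, commute z y) (central z).
Proof. exact: boolp.asboolP. Qed.

Lemma central1 : central 1.
Proof. by apply/centralP => y; exact/commute_sym/commute1. Qed.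

Lemma centralM y z : central y -> central z -> central (y * z).
Proof.
move=> /centralP cy /centralP cz; apply/centralP => t.
by apply/commute_sym/commuteM; apply/commute_sym.
Qed.

Lemma centralV z : central z -> central z^-1.
Proof.
by move=> /centralP cz; apply/centralP => t; apply/commute_sym/commuteV/commute_sym.
Qed.

Lemma conjg_central z y : central z -> z ^ y = z.
Proof. by move=> /centralP cz; apply/conjg_fixP/commgP. Qed.

Record central_elt := CentralElt { cval :> G; _ : central cval }.
HB.instance Definition _ := [isSub for cval].
HB.instance Definition _ := [Choice of central_elt by <:].

Definition cadd (a b : central_elt) : central_elt :=
  CentralElt (centralM (valP a) (valP b)).
Definition copp (a : central_elt) : central_elt := CentralElt (centralV (valP a)).
Definition czero : central_elt := CentralElt central1.

Lemma caddA : associative cadd.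
Proof. by move=> a b d; apply: val_inj; rewrite /= mulgA. Qed.

Lemma caddC : commutative cadd.
Proof. by move=> a b; apply: val_inj; have /centralP := valP a; apply. Qed.

Lemma cadd0 : left_id czero cadd.
Proof. by move=> a; apply: val_inj; rewrite /= mul1g. Qed.

Lemma caddN : left_inverse czero copp cadd.
Proof. by move=> a; apply: val_inj; rewrite /= mulVg. Qed.

HB.instance Definition _ := GRing.isZmodule.Build central_elt caddA caddC cadd0 caddN.

Lemma val_central_muln (a : central_elt) n : val (a *+ n)%R = val a ^+ n.
Proof. by elim: n => // n IHn; rewrite mulrS expgS -IHn. Qed.

Lemma central_elt_torsionfree :
    (forall z n, 0 < n -> z ^+ n = 1 -> z = 1) ->
  forall (a : central_elt) (d : int), d != 0%R -> (a *~ d = 0)%R -> a = 0%R.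
Proof.
move=> tf a d d0 ad; apply: val_inj; apply: (tf _ `|d|%N); first by rewrite absz_gt0.
rewrite -val_central_muln.
suff -> : (a *+ `|d| = 0)%R by [].
by case: d d0 ad => m _ //= /eqP; rewrite oppr_eq0 => /eqP.
Qed.
End CentralElements.

Section SecondCenter.
Local Open Scope group_scope.
Variables (G : groupType) (x : G).
Hypothesis Z2x : forall y, central [~ x, y].
Implicit Types y z : G.

Lemma conjg_mulcomm y : x ^ y = x * [~ x, y].
Proof. by rewrite mulKVg. Qed.

Lemma commgMr y z : [~ x, y * z] = [~ x, y] * [~ x, z].
Proof.
apply: (mulgI x); rewrite -conjg_mulcomm conjgM conjg_mulcomm conjMg !conjg_mulcomm.
rewrite conjg_central // -mulgA; congr (x * _).
by apply: esym; have /centralP := Z2x y; apply.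
Qed.

Lemma commgXr y n : [~ x, y ^+ n] = [~ x, y] ^+ n.
Proof. by elim: n => [|n IHn]; rewrite ?commg1 // !expgS commgMr IHn. Qed.

Lemma conjXg_commg y n : (x ^+ n) ^ y = x ^+ n * [~ x, y] ^+ n.
Proof.
rewrite conjXg conjg_mulcomm expgMn //.
by apply: commute_sym; have /centralP := Z2x y; apply.
Qed.

Definition commc y : central_elt G := CentralElt (Z2x y).

Lemma commcM y z : commc (y * z) = (commc y + commc z)%R.
Proof. exact/val_inj/commgMr. Qed.

Lemma coprime_quotient_conj (gT : finGroupType) (f : UMagmaMorphism.type G gT) q y :
  coprime #|gT| q -> exists t : gT, f (x ^+ q) ^ t = f (x ^+ q * [~ x, y]).
Proof.
(* [expg_invn] inverts the exponent [q] on a group of order coprime to [q]. *)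
move=> coq; exists (f (y ^+ expg_invn [set: gT] q)).
rewrite -gmulfJ conjXg_commg commgXr -expgM mulnC expgM.
rewrite [LHS]gmulfM [RHS]gmulfM !gmulfXn (expgK _ (in_setT _)) //=.
by rewrite cardsT.
Qed.

End SecondCenter.

(* Classically every type has decidable equality and a choice operator, which
   lets the abstract group [G : grp] carry MathComp's [groupType] structure. *)
HB.instance Definition _ (G : grp) := boolp.gen_eqMixin (gcar G).
HB.instance Definition _ (G : grp) := boolp.gen_choiceMixin (gcar G).

Section GrpRightAxioms.
Variable G : grp.

Lemma gmulgV (x : G) : gmul x (ginv x) = gone G.
Proof.
rewrite -[gmul x _]gmul1 -{1}(gmulV (ginv x)) -gmulA (gmulA (ginv x) x).
by rewrite gmulV gmul1 gmulV.
Qed.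

Lemma gmulg1 (x : G) : gmul x (gone G) = x.
Proof. by rewrite -(gmulV x) gmulA gmulgV gmul1. Qed.

End GrpRightAxioms.

HB.instance Definition _ (G : grp) :=
  isGroup.Build (gcar G) (@gmulA G) (@gmul1 G) (@gmulg1 G) (@gmulV G) (@gmulgV G).

Section GrpTheory.
Local Open Scope group_scope.
Variable G : grp.
Implicit Types x y g h : G.

Lemma gmulE x y : gmul x y = x * y. Proof. by []. Qed.
Lemma ginvE x : ginv x = x^-1. Proof. by []. Qed.

Lemma gexpE x n : gexp x n = x ^+ n.
Proof. by elim: n => //= n ->; rewrite expgS. Qed.

Lemma gcommE x y : gcomm x y = [~ x, y].
Proof. by rewrite /gcomm !gmulE !ginvE /commg /conjg !mulgA. Qed.

Lemma gconjugateP x y : gconjugate x y <-> exists h, x ^ h = y.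
Proof. by split=> -[h <-]; exists h; rewrite /conjg mulgA. Qed.

Lemma is_hom1 (gT : finGroupType) (f : G -> gT) : is_hom f -> f 1 = 1.
Proof. by move=> fM; apply: (mulgI (f 1)); rewrite -fM gmul1 mulg1. Qed.

Definition hom_morphism (gT : finGroupType) (f : G -> gT) (fM : is_hom f) :
    UMagmaMorphism.type G gT :=
  HB.pack f (isUMagmaMorphism.Build G gT f (is_hom1 fM, fM)).

Lemma In_nth (s : seq G) g : List.In g s -> exists i : 'I_(size s), nth 1 s i = g.
Proof.
elim: s => //= a s IHs [<- | /IHs[i <-]]; first by exists ord0.
by exists (lift ord0 i).
Qed.

Lemma gen_by_zspan (V : zmodType) (phi : G -> V) (s : seq G) :
    {morph phi : y z / y * z >-> (y + z)%R} ->
  forall g, gen_by s g -> zspan (fun i : 'I_(size s) => phi (nth 1 s i)) (phi g).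
Proof.
move=> phiM; have phi1 : phi 1 = 0%R.
  by apply: (@addrI _ (phi 1)); rewrite -phiM mulg1 addr0.
move=> g; elim=> {g} [g /In_nth[i <-] | | y z _ ? _ ? | y _ ?]; first exact: zspan_gen.
- by rewrite phi1; exact: zspan0.
- by rewrite gmulE phiM; exact: zspanD.
have -> : phi (ginv y) = (- phi y)%R.
  by apply/eqP; rewrite -addr_eq0 -phiM mulVg phi1.
exact: zspanN.
Qed.

Lemma upper_central_second_center n (u : G) :
    upper_central n u -> ~~ central u ->
  exists x : G, (forall y, central [~ x, y]) /\ ~~ central x.
Proof.
elim: n u => [|n IHn] u /= Zu nZu; first by rewrite Zu central1 in nZu.
have [Z2u | /not_all_ex_not[y nZuy]] := classic (forall y, central [~ u, y]).
  by exists u.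
by apply: (IHn [~ u, y]); [rewrite -gcommE | apply/negP].
Qed.

Lemma Fp_separable_commg_root p q x :
    conj_Fp_separable G p -> coprime p q -> (forall y, central [~ x, y]) ->
  forall g, exists h, [~ x, h] ^+ q = [~ x, g].
Proof.
move=> sepG pq Z2x g; apply: NNPP => no_root.
have not_conj : ~ gconjugate (x ^+ q) (x ^+ q * [~ x, g]).
  move=> /gconjugateP[h]; rewrite conjXg_commg // => /mulgI root_h.
  by apply: no_root; exists h.
have [gT [f [fM _ pgT]]] := sepG _ _ not_conj; apply.
apply: (coprime_quotient_conj Z2x (hom_morphism fM)).
by rewrite -cardsT; have [k ->] := p_natP pgT; rewrite coprimeXl.
Qed.

End GrpTheory.

Theorem proposition3 (G : grp) :
  finitely_generated G -> torsion_free G -> gnilpotent G ->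
  (exists p : nat, prime p /\ conj_Fp_separable G p) ->
  gabelian G.
Proof.
move=> [s gen_s] tf [n Zn] [p [p_pr sepG]]; apply: NNPP => nabG.
have [a nZa] : exists a : G, ~~ central a.
  apply: NNPP => allZ; apply: nabG => a b; apply: NNPP => ab; apply: allZ.
  by exists a; apply/centralP => /(_ b).
have [x [Z2x nZx]] := upper_central_second_center (Zn a) nZa.
pose c (i : 'I_(size s)) := commc Z2x (nth 1%g s i).
have span_c g : zspan c (commc Z2x g) := gen_by_zspan (commcM Z2x) (gen_s g).
have c_div i : exists2 w, zspan c w & c i = (w *+ p.+1)%R.
  have [h eh] := Fp_separable_commg_root sepG (coprimenS p) Z2x (nth 1%g s i).
  by exists (commc Z2x h); last by apply: val_inj; rewrite val_central_muln eh.
have [d d0 cd] := zspan_divisible_torsion (prime_gt0 p_pr : 1 < p.+1) c_div.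
have c0 i : c i = 0%R.
  by apply: central_elt_torsionfree (cd i) => // z m m0; rewrite -gexpE; exact: tf.
case/negP: nZx; apply/centralP => g; apply/commgP/eqP.
rewrite -[[~ x, g]%g]/(val (commc Z2x g)); have [v ->] := span_c g.
by rewrite big1 // => i _; rewrite c0 mul0rz.
Qed.
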